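(* Let $n\in\mathbb{N}$ and let $f_t:[0,1]^n\to\mathbb{R}$ be differentiable, convex and bounded on $[0,1]^n$ with $\|\nabla f_t(\mathbf{x})\|_2\le L_2$ for all $\mathbf{x}\in[0,1]^n$, where $L_2\in(0,\infty)$. Let $\mathbf{x}_t\in[0,1]^n$ and let the binary decision $\hat{\mathbf{x}}_t=\mathcal{R}(\mathbf{x}_t)$ be computed by \texttt{bOGD} (described in the context). Then \[ \mathbb{E}\big[|f_t(\hat{\mathbf{x}}_t)-f_t(\mathbf{x}_t)|\big]\le \frac{L_2\sqrt{n}}{2}. \]
   Context: \texttt{bOGD} (binary online gradient descent) for a sequence of losses $f_1,f_2,\dots$ on $[0,1]^n$, with step size $\eta>0$ and $\lambda\ge0$: choose $\mathbf{x}_1\in[0,1]^n$; for each round $t$, implement $\hat{\mathbf{x}}_t=\mathcal{R}(\mathbf{x}_t)$, then observe $f_t$ and set $\mathbf{x}_{t+1}=\arg\min_{\mathbf{x}\in[0,1]^n}\ \eta\nabla f_t(\mathbf{x}_t)^\top\mathbf{x}+\tfrac12\|\mathbf{x}-\mathbf{x}_t\|_2^2+\eta\lambda\|\mathbf{x}\|_1$. The randomization map $\mathcal{R}:[0,1]^n\to\{0,1\}^n$ returns a random vector whose $i$-th entry is a Bernoulli random variable with success probability $\mathbf{x}_t(i)$, so that $\mathbb{E}[\mathcal{R}(\mathbf{x}_t)]=\mathbf{x}_t$. *)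

From HB Require Import structures.
From mathcomp Require Import all_boot all_order all_algebra.
From mathcomp Require Import all_classical all_reals all_analysis.
Set Implicit Arguments. Unset Strict Implicit. Unset Printing Implicit Defensive.
Import Order.TTheory GRing.Theory Num.Theory.
Import numFieldNormedType.Exports.
Local Open Scope ring_scope.

Definition in_box {R : realType} {n : nat} (x : 'rV[R]_n) : Prop :=
  forall i : 'I_n, 0 <= x ord0 i <= 1.

Definition convex_on_box {R : realType} {n : nat} (f : 'rV[R]_n -> R) : Prop :=
  forall x y : 'rV[R]_n, in_box x -> in_box y -> forall t : R, 0 <= t <= 1 ->
    f ((1 - t) *: x + t *: y) <= (1 - t) * f x + t * f y.

Definition bounded_on_box {R : realType} {n : nat} (f : 'rV[R]_n -> R) : Prop :=
  exists M : R, forall x, in_box x -> `|f x| <= M.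

Definition basis_vec {R : realType} {n : nat} (i : 'I_n) : 'rV[R]_n :=
  \row_(j < n) (i == j)%:R.

Definition grad {R : realType} {n : nat} (f : 'rV[R]_n -> R) (x : 'rV[R]_n)
  : 'rV[R]_n := \row_(i < n) ('d f x (basis_vec i)).

Definition norm2 {R : realType} {n : nat} (v : 'rV[R]_n) : R :=
  Num.sqrt (\sum_(i < n) (v ord0 i) ^+ 2).

(* The randomization map R(x): a random vector in {0,1}^n with independent
   Bernoulli(x i) coordinates. *)
Definition bern_prob {R : realType} {n : nat} (x : 'rV[R]_n)
  (b : {ffun 'I_n -> bool}) : R :=
  \prod_(i < n) (if b i then x ord0 i else 1 - x ord0 i).

Definition outcome_vec {R : realType} {n : nat} (b : {ffun 'I_n -> bool})
  : 'rV[R]_n := \row_(i < n) (b i)%:R.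

Definition expect_R {R : realType} {n : nat} (x : 'rV[R]_n)
  (g : 'rV[R]_n -> R) : R :=
  \sum_(b : {ffun 'I_n -> bool}) bern_prob x b * g (outcome_vec b).

From HB Require Import structures.
From mathcomp Require Import all_boot all_order all_algebra.
From mathcomp Require Import all_classical all_reals all_analysis.
From mathcomp Require Import ring lra.
Import Order.TTheory GRing.Theory Num.Theory.
Import numFieldNormedType.Exports.
Set Implicit Arguments. Unset Strict Implicit.
Local Open Scope classical_set_scope.
Local Open Scope ring_scope.

(* Convexity gives f y - f z <= <grad f y, y - z>; with Cauchy-Schwarz and the
   gradient bound, f is L2-Lipschitz on the box, so |f (R x) - f x| <= L2 |R x - x|.
   Cauchy-Schwarz once more (Jensen for the square root) gives
   E |R x - x| <= sqrt (E |R x - x|^2) = sqrt (sum_i x_i (1 - x_i)) <= sqrt n / 2. *)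

Lemma sqr_sum_mul_le (R : realDomainType) (I : finType) (a b : I -> R) :
  (\sum_i a i * b i) ^+ 2 <= (\sum_i a i ^+ 2) * (\sum_i b i ^+ 2).
Proof.
pose F i j := a i ^+ 2 * b j ^+ 2 - a i * b i * (a j * b j).
have lagrange : \sum_i \sum_j (a i * b j - a j * b i) ^+ 2 =
    2 * ((\sum_i a i ^+ 2) * (\sum_i b i ^+ 2) - (\sum_i a i * b i) ^+ 2).
  transitivity (\sum_i \sum_j (F i j + F j i)).
    by apply: eq_bigr => i _; apply: eq_bigr => j _; rewrite /F; ring.
  rewrite (eq_bigr (fun i => \sum_j F i j + \sum_j F j i)); last first.
    by move=> i _; rewrite big_split.
  rewrite big_split /= [X in _ + X]exchange_big /= -mulr2n mulr_natl.
  rewrite [X in _ - X]expr2 !big_distrlr -sumrB; congr (_ *+ 2).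
  by apply: eq_bigr => i _; rewrite -sumrB.
have : 0 <= \sum_i \sum_j (a i * b j - a j * b i) ^+ 2.
  by apply: sumr_ge0 => i _; apply: sumr_ge0 => j _; exact: sqr_ge0.
by rewrite lagrange pmulr_rge0 ?ltr0n // subr_ge0.
Qed.

Section Box.
Variables (R : realType) (n : nat).
Implicit Types (u v x y z : 'rV[R]_n) (f : 'rV[R]_n -> R) (b : {ffun 'I_n -> bool}).

Lemma norm2_ge0 v : 0 <= norm2 v.
Proof. exact: sqrtr_ge0. Qed.

Lemma sqr_norm2 v : norm2 v ^+ 2 = \sum_i v ord0 i ^+ 2.
Proof. by rewrite sqr_sqrtr // sumr_ge0 // => i _; exact: sqr_ge0. Qed.

Lemma norm2_subC u v : norm2 (u - v) = norm2 (v - u).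
Proof. by congr Num.sqrt; apply: eq_bigr => i _; rewrite !mxE -sqrrN opprB. Qed.

Lemma sum_mul_le_norm2 u v : \sum_i u ord0 i * v ord0 i <= norm2 u * norm2 v.
Proof.
apply: le_trans (ler_norm _) _.
rewrite -sqrtr_sqr -sqrtrM ?sumr_ge0 // => [|i _]; last exact: sqr_ge0.
by rewrite ler_sqrt ?sqr_sum_mul_le // mulr_ge0 // sumr_ge0 // => i _; exact: sqr_ge0.
Qed.

Lemma row_sum_basis v : v = \sum_i v ord0 i *: basis_vec i.
Proof.
apply/rowP => j; rewrite summxE (bigD1 j) //= big1 => [|i /negbTE ij];
  by rewrite !mxE ?eqxx ?mulr1 ?addr0 // ij mulr0.
Qed.

Lemma diff_grad f y v : 'd f y v = \sum_i v ord0 i * grad f y ord0 i.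
Proof.
rewrite {1}(row_sum_basis v) linear_sum; apply: eq_bigr => i _.
by rewrite linearZ /= mxE.
Qed.

Lemma convex_diff_le f y z : differentiable f y -> convex_on_box f ->
  in_box y -> in_box z -> 'd f y (z - y) <= f z - f y.
Proof.
(* The difference quotients along [y, z] lie below the secant slope f z - f y. *)
move=> df cf yb zb; set v := z - y.
have dv : derivable f y v by exact: diff_derivable.
rewrite -deriveE //.
have quot_cvg : (fun h : R => h^-1 *: ((f \o shift y) (h *: v) - f y)) @ 0^'+
    --> 'D_v f y.
  move=> A /dv /nbhs_ballP [_ /posnumP[e] eA].
  by exists e%:num => //= h he h0; apply: eA => //; rewrite gt_eqF.
apply: (cvgr_to_le quot_cvg); exists 1 => //= h /= h1 h0.
have h_le1 : h <= 1 by move: h1; rewrite sub0r normrN gtr0_norm // => /ltW.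
have -> : h *: v + y = (1 - h) *: y + h *: z.
  by rewrite /v scalerBr scalerBl scale1r -addrA addrC [- _ + y]addrC.
have := cf y z yb zb h; rewrite (ltW h0) h_le1 => /(_ isT) conv.
by rewrite ler_pdivrMl //=; lra.
Qed.

Lemma convex_sub_le_norm2_grad f y z : differentiable f y -> convex_on_box f ->
  in_box y -> in_box z -> f y - f z <= norm2 (grad f y) * norm2 (y - z).
Proof.
move=> df cf yb zb.
have : f y - f z <= 'd f y (y - z).
  by rewrite -[y - z]opprB linearN /= lerNr opprB convex_diff_le.
move/le_trans; apply; rewrite diff_grad mulrC; exact: sum_mul_le_norm2.
Qed.

Lemma convex_lipschitz f L y z :
  (forall w, in_box w -> differentiable f w) -> convex_on_box f ->
  (forall w, in_box w -> norm2 (grad f w) <= L) ->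
  in_box y -> in_box z -> `|f y - f z| <= L * norm2 (y - z).
Proof.
move=> df cf gL yb zb; rewrite ler_norml; apply/andP; split.
  rewrite lerNl opprB norm2_subC.
  apply: le_trans (convex_sub_le_norm2_grad (df z zb) cf zb yb) _.
  by rewrite ler_wpM2r ?norm2_ge0 ?gL.
apply: le_trans (convex_sub_le_norm2_grad (df y yb) cf yb zb) _.
by rewrite ler_wpM2r ?norm2_ge0 ?gL.
Qed.

Lemma outcome_vec_in_box b : in_box (outcome_vec b : 'rV[R]_n).
Proof. by move=> i; rewrite mxE; case: (b i); rewrite /= ?lexx ?ler01. Qed.

Lemma bern_prob_ge0 x b : in_box x -> 0 <= bern_prob x b.
Proof.
move=> xb; apply: prodr_ge0 => i _; have /andP[x0 x1] := xb i.
by case: (b i); rewrite ?subr_ge0.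
Qed.

Lemma sum_bern_prob x : \sum_b bern_prob x b = 1.
Proof.
rewrite /bern_prob -(bigA_distr_bigA (fun j c => if c then x ord0 j else 1 - x ord0 j)).
by rewrite big1 // => j _; rewrite big_bool /= addrC subrK.
Qed.

Lemma sum_bern_prob_coord x i (g : bool -> R) :
  \sum_b bern_prob x b * g (b i) = x ord0 i * g true + (1 - x ord0 i) * g false.
Proof.
pose F j (c : bool) :=
  (if c then x ord0 j else 1 - x ord0 j) * (if j == i then g c else 1).
transitivity (\sum_(b : {ffun 'I_n -> bool}) \prod_(j < n) F j (b j)).
  apply: eq_bigr => b _; rewrite /F big_split /= /bern_prob; congr (_ * _).
  by rewrite (bigD1 i) //= eqxx big1 ?mulr1 // => j /negbTE ->.
rewrite -bigA_distr_bigA /= (bigD1 i) //= [X in _ * X]big1 ?mulr1.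
  by rewrite big_bool /F /= eqxx.
by move=> j /negbTE ji; rewrite big_bool /F /= ji !mulr1 addrC subrK.
Qed.

Lemma ler_expect_R x (g h : 'rV[R]_n -> R) : in_box x ->
  (forall b, g (outcome_vec b) <= h (outcome_vec b)) ->
  expect_R x g <= expect_R x h.
Proof.
by move=> xb gh; apply: ler_sum => b _; rewrite ler_wpM2l ?bern_prob_ge0.
Qed.

Lemma expect_RZl x c (g : 'rV[R]_n -> R) :
  expect_R x (fun y => c * g y) = c * expect_R x g.
Proof. by rewrite /expect_R mulr_sumr; apply: eq_bigr => b _; ring. Qed.

Lemma sqr_expect_R_le x (g : 'rV[R]_n -> R) : in_box x ->
  expect_R x g ^+ 2 <= expect_R x (fun y => g y ^+ 2).
Proof.
move=> xb; pose s b := Num.sqrt (bern_prob x b).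
have ss b : s b ^+ 2 = bern_prob x b by rewrite sqr_sqrtr ?bern_prob_ge0.
have := sqr_sum_mul_le s (fun b => s b * g (outcome_vec b)).
rewrite (eq_bigr _ (fun b _ => ss b)) sum_bern_prob mul1r.
under eq_bigr do rewrite mulrA -expr2 ss.
by under [X in _ <= X -> _]eq_bigr do rewrite exprMn ss.
Qed.

Lemma expect_R_le_sqrt x (g : 'rV[R]_n -> R) : in_box x ->
  expect_R x g <= Num.sqrt (expect_R x (fun y => g y ^+ 2)).
Proof.
move=> xb; apply: le_trans (ler_norm _) _; rewrite -sqrtr_sqr ler_sqrt.
  exact: sqr_expect_R_le.
by apply: sumr_ge0 => b _; rewrite mulr_ge0 ?bern_prob_ge0 ?sqr_ge0.
Qed.

Lemma expect_R_sqr_dist x :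
  expect_R x (fun y => norm2 (y - x) ^+ 2) = \sum_i x ord0 i * (1 - x ord0 i).
Proof.
rewrite /expect_R; under eq_bigr do rewrite sqr_norm2 mulr_sumr.
rewrite exchange_big; apply: eq_bigr => i _.
under eq_bigr do rewrite !mxE.
by rewrite (sum_bern_prob_coord x i (fun c => (c%:R - x ord0 i) ^+ 2)) /=; ring.
Qed.

Lemma expect_R_dist_le x : in_box x ->
  expect_R x (fun y => norm2 (y - x)) <= Num.sqrt n%:R / 2.
Proof.
move=> xb; apply: le_trans (expect_R_le_sqrt _ xb) _.
have -> : Num.sqrt n%:R / 2 = Num.sqrt (n%:R / 4) :> R.
  rewrite sqrtrM ?ler0n //; congr (_ * _).
  have -> : (4 : R) = 2 ^+ 2 by rewrite expr2 -natrM.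
  by rewrite -exprVn sqrtr_sqr ger0_norm // invr_ge0.
rewrite ler_sqrt ?divr_ge0 ?ler0n // expect_R_sqr_dist.
rewrite -[n in n%:R]card_ord -sum1_card natr_sum mulr_suml ler_sum // => i _.
by have := sqr_ge0 (x ord0 i - 2^-1); lra.
Qed.

End Box.

Theorem lemma2 (R : realType) (n : nat) (f : 'rV[R]_n -> R) (L2 : R)
  (hL2 : 0 < L2)
  (hdiff : forall x : 'rV[R]_n, in_box x -> differentiable f x)
  (hconv : convex_on_box f)
  (hbdd : bounded_on_box f)
  (hgrad : forall x : 'rV[R]_n, in_box x -> norm2 (grad f x) <= L2)
  (x : 'rV[R]_n) (hx : in_box x) :
  expect_R x (fun xh => `|f xh - f x|) <= L2 * Num.sqrt (n%:R) / 2.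
Proof.
have lip b : `|f (outcome_vec b) - f x| <= L2 * norm2 (outcome_vec b - x).
  exact: convex_lipschitz hdiff hconv hgrad (outcome_vec_in_box R b) hx.
apply: le_trans (ler_expect_R (h := fun y => L2 * norm2 (y - x)) hx lip) _.
by rewrite expect_RZl -mulrA ler_wpM2l ?(ltW hL2) ?expect_R_dist_le.
Qed.
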